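(* Let $\pi:\mathbb R^n\times[0,\infty]\to[0,\infty]$ be an arbitrage-free price function. Then: (1) $\pi(\mathbf 0,v)=0$ for every $v\in[0,\infty]$; (2) if $v\le v'$ then $\pi(\mathbf q,v)\ge\pi(\mathbf q,v')$; (3) $\pi(\mathbf q,0)\ge\pi(\mathbf q,v)$ for all $v\ge 0$; (4) if $\pi$ is continuous, then $\pi(\mathbf q,\infty)=0$ for every $\mathbf q\in\mathbb R^n$.
   Context: A query is a pair $(\mathbf q,v)$ with $\mathbf q\in\mathbb R^n$ and $v\in[0,\infty]$ (arithmetic in $[0,\infty]$ with $0\cdot\infty=0$). The determinacy relation $\mathbf S\rightarrow\mathbf Q$ between finite multisets of queries and queries is the smallest relation satisfying: (Summation) for every $k\ge 0$, $\{(\mathbf q_1,v_1),\ldots,(\mathbf q_k,v_k)\}\rightarrow(\mathbf q_1+\cdots+\mathbf q_k,\,v_1+\cdots+v_k)$ (for $k=0$: $\emptyset\rightarrow(\mathbf 0,0)$); (Scalar multiplication) for every $c\in\mathbb R$, $\{(\mathbf q,v)\}\rightarrow(c\mathbf q,c^2v)$; (Relaxation) $\{(\mathbf q,v)\}\rightarrow(\mathbf q,v')$ whenever $v\le v'$; (Transitivity) if $\mathbf S_1\rightarrow\mathbf Q_1,\ldots,\mathbf S_k\rightarrow\mathbf Q_k$ and $\{\mathbf Q_1,\ldots,\mathbf Q_k\}\rightarrow\mathbf Q$, then $\mathbf S_1\uplus\cdots\uplus\mathbf S_k\rightarrow\mathbf Q$. A price function $\pi:\mathbb R^n\times[0,\infty]\to[0,\infty]$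 is arbitrage-free if for every $m\ge 0$ and queries $\mathbf Q_1,\ldots,\mathbf Q_m,\mathbf Q$ with $\{\mathbf Q_1,\ldots,\mathbf Q_m\}\rightarrow\mathbf Q$ we have $\pi(\mathbf Q)\le\sum_{i=1}^m\pi(\mathbf Q_i)$ (the empty sum being $0$). *)

From HB Require Import structures.
From mathcomp Require Import all_boot all_order all_algebra.
From mathcomp Require Import all_classical all_reals all_analysis.
Set Implicit Arguments. Unset Strict Implicit. Unset Printing Implicit Defensive.
Import Order.TTheory GRing.Theory Num.Theory.
Import numFieldNormedType.Exports.
Local Open Scope ring_scope.
Local Open Scope ereal_scope.

(* A query (q, v) with q in R^n (row vector) and v in [0, +oo] (an extended
   real; validity 0 <= v is imposed separately). In \bar R, 0 * +oo = 0. *)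
Notation query R n := ('rV[R]_n * \bar R)%type.

Definition valid_query (R : realType) (n : nat) (Q : query R n) : Prop :=
  0 <= Q.2.

(* Determinacy relation between finite multisets of (valid) queries
   (multisets represented as sequences, closed under permutation) and queries. *)
Inductive determines (R : realType) (n : nat) : seq (query R n) -> query R n -> Prop :=
| det_sum : forall s : seq (query R n),
    (forall Q, Q \in s -> valid_query Q) ->
    determines s ((\sum_(Q <- s) Q.1)%R, \sum_(Q <- s) Q.2)
| det_scale : forall (q : 'rV[R]_n) (v : \bar R) (c : R),
    0 <= v -> determines [:: (q, v)] ((c *: q)%R, (c ^+ 2)%:E * v)
| det_relax : forall (q : 'rV[R]_n) (v v' : \bar R),
    0 <= v -> v <= v' -> determines [:: (q, v)] (q, v')
| det_trans : forall (ss : seq (seq (query R n))) (Qs : seq (query R n)) (Q : query R n),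
    size ss = size Qs ->
    (forall i, (i < size ss)%N ->
       determines (nth [::] ss i) (nth (0%R, 0) Qs i)) ->
    determines Qs Q ->
    determines (flatten ss) Q
| det_perm : forall (s s' : seq (query R n)) (Q : query R n),
    perm_eq s s' -> determines s Q -> determines s' Q.

(* A price function pi : R^n x [0,oo] -> [0,oo] (values on v < 0 irrelevant). *)
Definition price_function (R : realType) (n : nat) (pi : query R n -> \bar R) : Prop :=
  forall Q, valid_query Q -> 0 <= pi Q.

Definition arbitrage_free (R : realType) (n : nat) (pi : query R n -> \bar R) : Prop :=
  forall (s : seq (query R n)) (Q : query R n),
    determines s Q -> pi Q <= \sum_(X <- s) pi X.

From HB Require Import structures.
From mathcomp Require Import all_boot all_order all_algebra.
From mathcomp Require Import all_classical all_reals all_analysis.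
Import Order.TTheory GRing.Theory Num.Theory.
Import numFieldNormedType.Exports.
Local Open Scope classical_set_scope.
Local Open Scope ring_scope.

(* The empty bundle determines (0, 0), so that query is free; relaxation makes
   prices antitone in the variance, hence every (0, v) is free as well.  For
   (4), rescaling by 1/c maps (c q, +oo) to (q, +oo), so pi (q, +oo) is bounded
   by pi (q / k, +oo) for every k; these queries tend to the free query
   (0, +oo), and continuity transfers the bound to the limit. *)

Section ArbitrageFreePrice.
Context {R : realType} {n : nat} { pi : query R n -> \bar R }.
Hypotheses (pi_ge0 : price_function pi) (pi_af : arbitrage_free pi).

Lemma price_antitone_variance (q : 'rV[R]_n) (v v' : \bar R) :
  (0 <= v)%E -> (v <= v')%E -> (pi (q, v') <= pi (q, v))%E.
Proof.
by move=> v_ge0 vv'; have := pi_af _ _ (det_relax q v_ge0 vv'); rewrite big_seq1.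
Qed.

Lemma price_scale_le (q : 'rV[R]_n) (v : \bar R) (c : R) :
  (0 <= v)%E -> (pi (c *: q, (c ^+ 2)%:E * v) <= pi (q, v))%E.
Proof. by move=> v_ge0; have := pi_af _ _ (det_scale q c v_ge0); rewrite big_seq1. Qed.

Lemma price00 : pi (0, 0%E) = 0%E.
Proof.
have nil_valid (Q : query R n) : Q \in [::] -> valid_query Q by rewrite in_nil.
apply/le_anti; rewrite pi_ge0 /valid_query ?lexx // andbT.
by have := pi_af _ _ (det_sum nil_valid); rewrite !big_nil.
Qed.

Lemma price0q (v : \bar R) : (0 <= v)%E -> pi (0, v) = 0%E.
Proof.
move=> v_ge0; apply/le_anti; rewrite pi_ge0 // andbT.
by rewrite -price00 price_antitone_variance.
Qed.

Lemma price_infty_le_scale (q : 'rV[R]_n) (c : R) :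
  c != 0 -> (pi (q, +oo%E) <= pi (c *: q, +oo%E))%E.
Proof.
move=> c_neq0; have := @price_scale_le (c *: q) +oo%E c^-1 (leey 0%E).
rewrite scalerA mulVf // scale1r mulry gtr0_sg ?mul1e //.
by rewrite exprn_even_gt0 //= invr_eq0.
Qed.

End ArbitrageFreePrice.

Lemma cvg_harmonic_query {R : realType} {n : nat} (q : 'rV[R]_n) :
  ((harmonic k : R) *: q, +oo%E : \bar R) @[k --> \oo] --> ((0 : 'rV[R]_n), +oo%E : \bar R).
Proof.
apply: (cvg_pair (G := nbhs (0 : 'rV[R]_n)) (H := nbhs (+oo%E : \bar R))
  (f := fun k => (harmonic k : R) *: q)); last exact: cvg_cst.
by rewrite -(scale0r q); apply: cvgZr_tmp; exact: cvg_harmonic.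
Qed.

Lemma continuous_price_infty (R : realType) (n : nat) (pi : query R n -> \bar R) :
  price_function pi -> arbitrage_free pi ->
  {within [set Q : query R n | (0 <= Q.2)%E], continuous pi} ->
  forall q : 'rV[R]_n, pi (q, +oo%E) = 0%E.
Proof.
move=> pi_ge0 pi_af pi_cont q.
have valid_0oo : [set Q : query R n | (0 <= Q.2)%E] (0, +oo%E) by rewrite /= leey.
have pi_cvg : pi ((harmonic k : R) *: q, +oo%E) @[k --> \oo] --> pi (0, +oo%E).
  apply: cvg_trans ((proj1 (subspace_continuousP _ _) pi_cont) _ valid_0oo).
  move=> P /= /(cvg_harmonic_query q); rewrite /nbhs /=.
  by apply: filterS => k; apply; exact: leey.
apply/le_anti; rewrite pi_ge0 /valid_query ?leey // andbT.
rewrite -(price0q pi_ge0 pi_af +oo%E (leey 0%E)).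
apply: (closed_cvg _ (@closed_ereal_le_ereal _ _) _ _ pi_cvg).
apply: nearW => k; apply: price_infty_le_scale => //.
by rewrite gt_eqF // harmonic_gt0.
Qed.

Theorem proposition3 (R : realType) (n : nat) (pi : query R n -> \bar R) :
  price_function pi -> arbitrage_free pi ->
  (forall v : \bar R, (0 <= v)%E -> pi (0, v) = 0%E) /\
  (forall (q : 'rV[R]_n) (v v' : \bar R), (0 <= v)%E -> (v <= v')%E ->
     (pi (q, v') <= pi (q, v))%E) /\
  (forall (q : 'rV[R]_n) (v : \bar R), (0 <= v)%E -> (pi (q, v) <= pi (q, 0%E))%E) /\
  ({within [set Q : query R n | (0 <= Q.2)%E], continuous pi} ->
     forall q : 'rV[R]_n, pi (q, +oo%E) = 0%E).
Proof.
move=> pi_ge0 pi_af; split; first exact: price0q.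
split; first exact: price_antitone_variance.
split; first by move=> q v; apply: price_antitone_variance.
exact: continuous_price_infty.
Qed.
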